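(* Let $G$ be a connected chordal graph with at least two vertices. A vertex $v\in V(G)$ is an $\mathcal{F}$-branch leaf of some BFS ordering of $G$ if and only if the radius of the induced subgraph $G[N_G(v)]$ is at most two.
   Context: Graphs are finite, simple, undirected; $N_G(v)$ is the open neighborhood of $v$. A graph is chordal if it has no induced cycle of length at least 4. The eccentricity of a vertex is its largest distance to any other vertex, and the radius of a graph is the smallest eccentricity of its vertices (infinite if the graph is disconnected). A vertex ordering of $G$ is a bijection $\sigma:\{1,\dots,n\}\to V(G)$; $u\prec_\sigma w$ means $u$ comes before $w$. BFS orderings are produced by the label search: initially all labels are $\emptyset$; for $i=1,\dots,n$ choose any unnumbered vertex $x$ such that there is no unnumbered $y$ with $\mathrm{label}(x)\prec\mathrm{label}(y)$, set $\sigma(i)=x$, and add $i$ to the labels of the unnumbered neighbors of $x$, where $A\prec B$ iff ($A=\emptyset$ and $B\neq\emptyset$) or $\min(A)>\min(B)$. The $\mathcal{F}$-tree of $\sigma$ is the spanning tree containing, for each $v\neq\sigma(1)$, the edge from $v$ to its leftmost neighbor in $\sigma$. A vertex $v\neq\sigma(1)$ that is a leaf of the $\mathcal{F}$-tree is an $\mathcal{F}$-branch leaf of $\sigma$. *)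

From mathcomp Require Import all_boot.
Set Implicit Arguments. Unset Strict Implicit. Unset Printing Implicit Defensive.

Section Graphs.
Variables (T : finType) (e : rel T).

Definition simple_graph : Prop := symmetric e /\ irreflexive e.

Definition connected_graph : Prop := forall x y : T, connect e x y.

Definition nbhd (v : T) : {set T} := [set w | e v w].

Definition induced_cycle (c : seq T) : Prop :=
  [/\ uniq c, 3 <= size c, cycle e c &
      forall x y, x \in c -> y \in c -> e x y -> (y == next c x) || (x == next c y)].

Definition chordal : Prop := forall c : seq T, induced_cycle c -> size c < 4.

(* Radius of the induced subgraph G[S] is at most k: some u in S has
   eccentricity at most k in G[S], i.e. every w in S is reached from u by a
   walk of length <= k all of whose vertices lie in S.  (A disconnected G[S]
   has infinite radius, which is never <= k; this is automatic here.) *)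
Definition radius_le (S : {set T}) (k : nat) : Prop :=
  exists2 u, u \in S &
    forall w, w \in S -> exists p : seq T,
      [/\ path e u p, last u p = w, all (mem S) p & size p <= k].

(* Vertex orderings: sigma is represented by the sequence
   s = [:: sigma(1); ...; sigma(n)] (a duplicate-free enumeration of T);
   position j (0-based) in s corresponds to number j+1. *)
Definition vertex_ordering (s : seq T) : Prop := uniq s /\ forall x, x \in s.

(* label of vertex x after steps 1..i have been performed (0-based: the
   numbers are the positions j < i), listed increasingly; valid as long as x is
   unnumbered. *)
Definition label (s : seq T) (i : nat) (x : T) : seq nat :=
  [seq j <- iota 0 i | e (nth x s j) x].

(* A ≺ B  iff  (A = ∅ and B ≠ ∅) or min A > min B  (labels are increasing
   lists, so min = head). *)
Definition label_prec (A B : seq nat) : bool :=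
  match A, B with
  | [::], _ :: _ => true
  | a :: _, b :: _ => b < a
  | _, _ => false
  end.

Definition bfs_ordering (s : seq T) : Prop :=
  vertex_ordering s /\
  forall i, i < size s -> forall y, i <= index y s ->
    ~~ label_prec (label s i (nth y s i)) (label s i y).

Definition leftmost_nbr (s : seq T) (v : T) : T := nth v s (find (e v) s).

Definition ftree_edge (s : seq T) (v w : T) : bool :=
  ((v != head v s) && (leftmost_nbr s v == w)) ||
  ((w != head w s) && (leftmost_nbr s w == v)).

Definition F_branch_leaf (s : seq T) (v : T) : Prop :=
  v != head v s /\ #|[set w | ftree_edge s v w]| = 1.

End Graphs.

From mathcomp Require Import all_boot zify.
Set Implicit Arguments. Unset Strict Implicit. Unset Printing Implicit Defensive.

(* Root a BFS ordering at its first vertex r and let d be the distance to r;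
   the leftmost neighbour of a vertex x <> r lies one level below x.  In a
   chordal graph the lower neighbours of a vertex form a clique, and two
   adjacent vertices x, y of the same level cannot have lower neighbours a of x
   and b of y with x, b and y, a non-adjacent: otherwise a walk from a to b
   through the lower levels closes, with x (and y), a chordless cycle of length
   at least 4.  If v is an F-branch leaf, no vertex has v as its leftmost
   neighbour, and these two facts put every neighbour of v within distance 2 of
   the leftmost neighbour of v inside G[N(v)].  Conversely, if u has
   eccentricity at most 2 in G[N(v)], a BFS that starts with u, then the other
   neighbours of u, then v, gives every other neighbour of v a leftmost
   neighbour before v. *)

Lemma next_cat_cons (T : eqType) (c1 c2 : seq T) u w :
  uniq (c1 ++ u :: w :: c2) -> next (c1 ++ u :: w :: c2) u = w.
Proof. by move=> uc; rewrite -(next_rot (size c1) uc) rot_size_cat /= eqxx. Qed.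

Lemma next_cons_head (T : eqType) x (q : seq T) : next (x :: q) x = head x q.
Proof. by case: q => [|y q] /=; rewrite eqxx. Qed.

Lemma next_cons_last (T : eqType) x (q : seq T) :
  uniq (x :: q) -> next (x :: q) (last x q) = x.
Proof.
rewrite lastI -cats1 => uq; rewrite -(next_rot (size (belast x q)) uq) rot_size_cat.
by case: q {uq} => [|y q] /=; rewrite eqxx.
Qed.

Lemma not_uniq_split (T : eqType) (q : seq T) :
  ~~ uniq q -> exists q1 z q2 q3, q = q1 ++ z :: q2 ++ z :: q3.
Proof.
elim: q => // y q IH /=; rewrite negb_and negbK; case yq: (y \in q) => /= nuq.
  by case/splitPr: yq => q2 q3; exists [::], y, q2, q3.
by have [q1 [z [q2 [q3 ->]]]] := IH nuq; exists (y :: q1), z, q2, q3.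
Qed.

Lemma mem_split2 (T : eqType) (q : seq T) u w : u \in q -> w \in q -> u != w ->
  exists q1 q2 q3, q = q1 ++ u :: q2 ++ w :: q3 \/ q = q1 ++ w :: q2 ++ u :: q3.
Proof.
case/splitPr => q1 q'; rewrite mem_cat inE => /orP[|/orP[/eqP->|]].
- by case/splitPr => l1 l2 _; exists l1, l2, q'; right; rewrite -catA.
- by rewrite eqxx.
- by case/splitPr => r1 r2 _; exists q1, r1, r2; left.
Qed.

Section ApexWalks.
Variables (T : finType) (e : rel T).
Hypotheses (e_sym : symmetric e) (e_irr : irreflexive e).

Definition chordless (q : seq T) : Prop :=
  forall q1 u q2 w q3, q = q1 ++ u :: q2 ++ w :: q3 -> e u w -> q2 = [::].

(* With x, the walk q closes a cycle in which x has no chord. *)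
Definition apex_walk (x : T) (q : seq T) : Prop :=
  [/\ sorted e q, x \notin q, head x q != last x q, ~~ e (head x q) (last x q) &
      {in q, forall z, e x z = (z == head x q) || (z == last x q)}].

Lemma apex_walk_sub x q q' : apex_walk x q -> sorted e q' ->
  head x q' = head x q -> last x q' = last x q -> {subset q' <= q} ->
  apex_walk x q'.
Proof.
move=> [_ xq hl nhl adj] sq' hq' lq' sub; split; rewrite ?hq' ?lq' //.
  exact: contra (sub x) xq.
by move=> z /sub; apply: adj.
Qed.

Lemma apex_walk_shortcut x q1 u m q3 :
  apex_walk x (q1 ++ u :: m ++ q3) -> path e u q3 -> last u (m ++ q3) = last u q3 ->
  apex_walk x (q1 ++ u :: q3).
Proof.
move=> aw pq3 lq3; have [sq _ _ _ _] := aw; apply: apex_walk_sub aw _ _ _ _.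
- by move: sq; rewrite !sorted_cat_cons pq3 => /andP[->].
- by case: q1 {sq}.
- by rewrite !last_cat /= lq3.
- by move=> z; rewrite !mem_cat !inE mem_cat => /or3P[| |] ->; rewrite ?orbT.
Qed.

Lemma apex_walk_size x q : apex_walk x q -> 3 <= size q.
Proof.
by case=> + _ + + _; case: q => [|a [|b [|c q]]] //=; rewrite ?eqxx // andbT => ->.
Qed.

Lemma apex_walk_ends x q : apex_walk x q -> e x (head x q) && e x (last x q).
Proof.
move=> aw; have [_ _ _ _ adj] := aw; have := apex_walk_size aw.
case: q {aw} adj => // a q adj _ /=.
by rewrite !adj ?mem_head ?mem_last // !eqxx ?orbT.
Qed.

Lemma apex_walk_induced_cycle x q :
  apex_walk x q -> uniq q -> chordless q -> induced_cycle e (x :: q).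
Proof.
move=> aw uq nochord; have [sq xq _ _ adj] := aw.
have ux : uniq (x :: q) by rewrite /= xq uq.
have /andP[xh xl] := apex_walk_ends aw.
split=> //; first exact: ltnW (apex_walk_size aw).
  rewrite /cycle rcons_path (e_sym _ x) xl andbT.
  by case: q {aw xq adj ux uq nochord xl} sq xh => //= a q -> ->.
have next_in_q u w : u \in q -> w \in q -> e u w ->
    w = next (x :: q) u \/ u = next (x :: q) w.
  move=> uq' wq' euw; have uw : u != w by apply: contraTneq euw => ->; rewrite e_irr.
  have [q1 [q2 [q3 [def_q | def_q]]]] := mem_split2 uq' wq' uw.
  - have {}def_q : q = q1 ++ [:: u, w & q3] by rewrite def_q (nochord _ _ _ _ _ def_q).
    by left; move: ux; rewrite def_q -cat_cons => /next_cat_cons ->.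
  - have {}def_q : q = q1 ++ [:: w, u & q3].
      by rewrite def_q (nochord _ _ _ _ _ def_q) // e_sym.
    by right; move: ux; rewrite def_q -cat_cons => /next_cat_cons ->.
move=> u w; rewrite !inE => /orP[/eqP-> | uq'] /orP[/eqP-> | wq']; rewrite ?e_irr //.
- by rewrite adj // => /orP[] /eqP->;
    rewrite next_cons_head ?next_cons_last ?eqxx ?orbT.
- by rewrite e_sym adj // => /orP[] /eqP->;
    rewrite next_cons_head ?next_cons_last ?eqxx ?orbT.
- by move/(next_in_q _ _ uq' wq') => [] ->; rewrite eqxx ?orbT.
Qed.

Hypothesis e_chordal : chordal e.

(* Cutting out a repeated stretch or a chord of an apex walk leaves an apex
   walk; a walk that admits neither closes an induced cycle of length >= 4. *)
Lemma chordal_no_apex_walk x q : ~ apex_walk x q.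
Proof.
elim: {q}_.+1 {-2}q (ltnSn (size q)) => // n IH q /ltnSE size_q aw.
have shorter q1 u m q3 : q = q1 ++ u :: m ++ q3 -> m != [::] -> path e u q3 ->
    last u (m ++ q3) = last u q3 -> False.
  move=> def_q m0 pq3 lq3; apply: (IH (q1 ++ u :: q3)); last first.
    by apply: apex_walk_shortcut lq3 => //; rewrite -def_q.
  by move: size_q m0; rewrite def_q !size_cat /= size_cat; case: (m) => //= *; lia.
have uq : uniq q.
  apply/negPn/negP => /not_uniq_split [q1 [z [q2 [q3 def_q]]]].
  apply: (shorter q1 z (rcons q2 z) q3); rewrite ?cat_rcons ?last_cat ?last_rcons //.
    by case: q2 {def_q}.
  by case: aw; rewrite def_q sorted_cat_cons cat_path /= => /andP[_ /andP[_ /andP[]]].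
have nochord : chordless q.
  move=> q1 u [|z q2] w q3 def_q euw //; exfalso.
  apply: (shorter q1 u (z :: q2) (w :: q3) def_q) => //=; last by rewrite last_cat.
  by case: aw; rewrite def_q sorted_cat_cons cat_path /= euw => /andP[_ /andP[_ /andP[]]].
have := e_chordal (apex_walk_induced_cycle aw uq nochord).
by rewrite ltnNge /= ltnS (apex_walk_size aw).
Qed.

End ApexWalks.

Section Levels.
Variables (T : finType) (e : rel T) (r : T).
Hypotheses (e_sym : symmetric e) (r_conn : forall y, connect e r y).

Definition reach_in (x : T) (n : nat) : bool :=
  [exists t : n.-tuple T, path e r t && (last r t == x)].

Lemma reach_in_exists x : exists n, reach_in x n.
Proof.
have /connectP [p pp lp] := r_conn x.
by exists (size p); apply/existsP; exists (in_tuple p); rewrite /= pp lp eqxx.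
Qed.

Definition dist (x : T) : nat := ex_minn (reach_in_exists x).

Lemma dist_le_size x t : path e r t -> last r t = x -> dist x <= size t.
Proof.
move=> pt lt; rewrite /dist; case: ex_minnP => m _; apply.
by apply/existsP; exists (in_tuple t); rewrite /= pt lt eqxx.
Qed.

Lemma shortest_path x : exists t, [/\ path e r t, last r t = x & size t = dist x].
Proof.
rewrite /dist; case: ex_minnP => m /existsP [t /andP [pt /eqP lt]] _.
by exists t; rewrite size_tuple.
Qed.

Lemma dist_root : dist r = 0.
Proof. by apply/eqP; rewrite -leqn0; apply: (@dist_le_size _ [::]). Qed.

Lemma dist_eq0 x : dist x = 0 -> x = r.
Proof. by have [t [_ <- <-]] := shortest_path x; move/size0nil ->. Qed.

Lemma dist_edge x y : e x y -> dist y <= (dist x).+1.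
Proof.
move=> exy; have [t [pt lt <-]] := shortest_path x.
rewrite -(size_rcons t y); apply: dist_le_size; last by rewrite last_rcons.
by rewrite rcons_path pt lt exy.
Qed.

Lemma dist_pred x : x != r -> exists2 z, e z x & (dist z).+1 = dist x.
Proof.
move=> xr; have [t [pt lt st]] := shortest_path x.
case/lastP: t pt lt st => [|t z] pt lt st; first by rewrite -lt eqxx in xr.
move: pt; rewrite rcons_path last_rcons in lt * => /andP [pt ez]; subst z.
exists (last r t) => //; apply/eqP; rewrite eqn_leq dist_edge // andbT.
by rewrite -st size_rcons ltnS dist_le_size.
Qed.

Lemma dist_far_nonadj k x z : k.+2 <= dist x -> dist z <= k -> ~~ e x z.
Proof.
move=> dx dz; apply/negP; rewrite e_sym => /dist_edge dzx.
by move: (leq_trans dx dzx); rewrite ltnS leqNgt ltnS dz.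
Qed.

Definition ball_rel (k : nat) : rel T :=
  [rel u w | [&& e u w, dist u <= k & dist w <= k]].

Lemma connect_ball k z : dist z <= k -> connect (ball_rel k) r z.
Proof.
elim: {z}_.+1 {-2}z (ltnSn (dist z)) => // n IH z /ltnSE dzn dzk.
have [-> | zr] := eqVneq z r; first exact: connect0.
have [y eyz dy] := dist_pred zr.
have dyk : dist y <= k by lia.
apply: connect_trans (IH y _ dyk) (connect1 _); first lia.
by rewrite /ball_rel /= eyz dyk dzk.
Qed.

Lemma ball_path k a b : dist a <= k -> dist b <= k ->
  exists p, [/\ path e a p, last a p = b & {in p, forall z, dist z <= k}].
Proof.
move=> da db; have ball_sym : symmetric (ball_rel k).
  by move=> u w; rewrite /ball_rel /= e_sym (andbC (dist u <= k)).
have : connect (ball_rel k) a b.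
  apply: connect_trans (connect_ball db).
  by rewrite (sym_connect_sym ball_sym); apply: connect_ball.
case/connectP => p pp lp; exists p; split.
- by apply: sub_path pp => u w /andP[].
- by rewrite lp.
- move=> z; elim: p a pp {lp da} => // y p IHp a /= /andP[/and3P[_ _ dy] pp].
  by rewrite inE => /orP[/eqP -> // | /(IHp _ pp)].
Qed.

Lemma lower_walk k a b : dist a = k.+1 -> dist b = k.+1 -> exists p,
  [/\ path e a p, last a p = b & {in p, forall z, z != b -> dist z <= k}].
Proof.
have parent_ex c : dist c = k.+1 -> exists2 c', e c' c & dist c' = k.
  move=> dc; have cr : c != r by apply: contra_eqN dc => /eqP ->; rewrite dist_root.
  have [c' ec' dc'] := dist_pred cr.
  by exists c' => //; apply: succn_inj; rewrite dc' dc.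
move=> /parent_ex [a' ea' da'] /parent_ex [b' eb' db'].
have [p [pp lp dp]] := ball_path (eq_leq da') (eq_leq db').
exists (a' :: rcons p b); split.
- by rewrite /= rcons_path pp lp e_sym ea' eb'.
- by rewrite /= last_rcons.
- move=> z; rewrite inE mem_rcons inE => /or3P[/eqP -> _ | /eqP -> | /dp //].
    by rewrite da'.
  by rewrite eqxx.
Qed.

Hypotheses (e_irr : irreflexive e) (e_chordal : chordal e).

Lemma lower_nbrs_adj x a b : e x a -> e x b -> a != b -> dist a = dist b ->
  (dist a).+1 = dist x -> e a b.
Proof.
move=> exa exb ab dab dax; apply/negPn/negP => nab.
case da: (dist a) dax dab => [|k] dax dab.
  by rewrite (dist_eq0 da) (dist_eq0 (esym dab)) eqxx in ab.
have [p [pp lp dp]] := lower_walk da (esym dab).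
apply: (chordal_no_apex_walk e_sym e_irr e_chordal (x := x) (q := a :: p)).
have far z : z \in p -> z != b -> ~~ e x z.
  by move=> zp zb; apply: (dist_far_nonadj (k := k)); rewrite -?dax ?dp.
split; rewrite /= ?lp //.
- rewrite inE negb_or; apply/andP; split.
    by apply: contraTneq exa => <-; rewrite e_irr.
  apply/negP => xp; have [xb | xb] := eqVneq x b; first by rewrite xb e_irr in exb.
  by have := dp x xp xb; rewrite -dax; lia.
- move=> z; rewrite inE => /orP[/eqP -> | zp]; first by rewrite exa eqxx.
  have [-> | zb] := eqVneq z b; first by rewrite exb orbT.
  rewrite (negbTE (far z zp zb)) orbF; apply/esym/negbTE/eqP => za.
  by move: (dp z zp zb); rewrite za da ltnn.
Qed.

Lemma lower_nbrs_cross x y a b : e x y -> dist x = dist y -> e x a -> e y b ->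
  dist a = dist b -> (dist a).+1 = dist x -> e x b || e y a.
Proof.
move=> exy dxy exa eyb dab dax; apply/negPn/negP; rewrite negb_or => /andP[nxb nya].
have ab : a != b by apply: contraNneq nxb => <-.
case da: (dist a) dax dab => [|k] dax dab.
  by rewrite (dist_eq0 da) (dist_eq0 (esym dab)) eqxx in ab.
have [p [pp lp dp]] := lower_walk da (esym dab).
apply: (chordal_no_apex_walk e_sym e_irr e_chordal (x := x) (q := a :: rcons p y)).
have far z : z \in p -> ~~ e x z.
  move=> zp; have [-> // | zb] := eqVneq z b.
  by apply: (dist_far_nonadj (k := k)); rewrite -?dax ?dp.
have ay : a != y by apply/eqP => ay; move: dxy; rewrite -ay -dax da; lia.
split; rewrite /= ?last_rcons //.
- by rewrite rcons_path pp ?lp e_sym eyb.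
- rewrite !inE mem_rcons inE !negb_or; apply/and3P; split.
  + by apply: contraTneq exa => <-; rewrite e_irr.
  + by apply: contraTneq exy => <-; rewrite e_irr.
  + apply/negP => xp; have [xb | xb] := eqVneq x b.
      by move: dab; rewrite -xb -dax; lia.
    by have := dp x xp xb; rewrite -dax; lia.
- by rewrite e_sym.
- move=> z; rewrite inE mem_rcons inE => /or3P[/eqP -> | /eqP -> | zp].
  + by rewrite exa eqxx.
  + by rewrite exy eqxx orbT.
  rewrite (negbTE (far z zp)); apply/esym/norP; split; apply/eqP => zeq; subst z.
  + have [ab' | ab'] := eqVneq a b; first by rewrite ab' eqxx in ab.
    by have := dp a zp ab'; rewrite da; lia.
  + have [yb | yb] := eqVneq y b; first by rewrite yb e_irr in eyb.
    by have := dp y zp yb; rewrite -dxy -dax; lia.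
Qed.

End Levels.

Lemma path_crossing (T : Type) (e : rel T) (P : pred T) x p :
  path e x p -> P x -> ~~ P (last x p) -> exists u w, [/\ P u, ~~ P w & e u w].
Proof.
elim: p x => [|w p IHp] x /=; first by move=> _ ->.
case/andP=> exw pp Px; case Pw: (P w); first exact: IHp.
by move=> _; exists x, w; rewrite Pw.
Qed.

Section Labels.
Variables (T : finType) (e : rel T).

Lemma label_nil s i y : i <= find (e^~ y) s -> label e s i y = [::].
Proof.
move=> iy; rewrite /label -(filter_pred0 (iota 0 i)); apply: eq_in_filter => j.
by rewrite mem_iota => /andP[_ ji]; exact: (before_find (a := e^~ y) y (leq_trans ji iy)).
Qed.

Lemma label_cons s i y : find (e^~ y) s < i -> i <= size s ->
  exists l, label e s i y = find (e^~ y) s :: l.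
Proof.
move=> fi isz; rewrite /label -(subnKC (ltnW fi)) iotaD filter_cat.
rewrite -[X in X ++ _]/(label e s (find (e^~ y) s) y) label_nil //.
case def_k: (i - _) => [|k]; first by move/eqP: def_k; rewrite subn_eq0 leqNgt fi.
have has_y : has (e^~ y) s by rewrite has_find (leq_trans fi isz).
by rewrite /= add0n (@nth_find _ y (e^~ y)) //; eexists.
Qed.

(* At step i the label of y is headed by the position of its leftmost
   neighbour, if that position is below i, and is empty otherwise. *)
Lemma label_precE s i y y' : i <= size s ->
  label_prec (label e s i y) (label e s i y') =
  (find (e^~ y') s < minn i (find (e^~ y) s)).
Proof.
move=> isz; have [fy' | fy'] := ltnP (find (e^~ y') s) i; last first.
  rewrite [label e s i y']label_nil //; case: (label e s i y) => [|? ?];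
  by apply/esym/negbTE; rewrite -leqNgt (leq_trans (geq_minl _ _) fy').
have [l' ->] := label_cons fy' isz.
have [fy | fy] := ltnP (find (e^~ y) s) i.
  by have [l ->] := label_cons fy isz.
by rewrite label_nil.
Qed.

End Labels.

Section LeftmostNbr.
Variables (T : finType) (e : rel T) (s : seq T).

Lemma find_le_index x y : e x y -> y \in s -> find (e x) s <= index y s.
Proof.
move=> exy ys; rewrite leqNgt; apply/negP => /(before_find y).
by rewrite nth_index // exy.
Qed.

Lemma leftmost_nbr_adj x : find (e x) s < size s -> e x (leftmost_nbr e s x).
Proof. by move=> fx; apply: nth_find; rewrite has_find. Qed.

Lemma index_leftmost_nbr x : uniq s -> find (e x) s < size s ->
  index (leftmost_nbr e s x) s = find (e x) s.
Proof. by move=> us fx; rewrite index_uniq. Qed.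

End LeftmostNbr.

Section BFS.
Variables (T : finType) (e : rel T) (s : seq T) (r : T).
Hypotheses (e_sym : symmetric e) (e_conn : connected_graph e).
Hypotheses (s_bfs : bfs_ordering e s) (s_root : head r s = r).

Local Notation parent := (leftmost_nbr e s).
Local Notation idx x := (index x s).

Let s_uniq : uniq s. Proof. by case: s_bfs => [[]]. Qed.
Let s_all x : x \in s. Proof. by case: s_bfs => [[_]]. Qed.

Let find_sym x : find (e^~ x) s = find (e x) s.
Proof. by apply: eq_find => y; apply: e_sym. Qed.

Lemma index_root : idx r = 0.
Proof. by case: s s_root (s_all r) => //= y s' ->; rewrite eqxx. Qed.

Lemma index_gt0 x : x != r -> 0 < idx x.
Proof.
move=> xr; rewrite lt0n; apply: contra xr => /eqP x0.
by rewrite -(nth_index r (s_all x)) x0 nth0 s_root.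
Qed.

Lemma bfs_find_min x y : idx x <= idx y -> minn (idx x) (find (e x) s) <= find (e y) s.
Proof.
move=> xy; have [_ bfs] := s_bfs.
have := bfs (idx x) _ y xy; rewrite index_mem nth_index // => /(_ (s_all x)).
rewrite label_precE; last by rewrite ltnW // index_mem.
by rewrite !find_sym -leqNgt.
Qed.

Lemma find_before x : x != r -> find (e x) s < idx x.
Proof.
move=> xr; rewrite ltnNge; apply/negP => xf.
have /connectP [p pp lp] := e_conn r x.
have [u [w [uP wP euw]]] : exists u w, [/\ idx u < idx x, ~~ (idx w < idx x) & e u w].
  by apply: (path_crossing pp); rewrite -?lp ?ltnn ?index_root ?index_gt0.
rewrite -leqNgt in wP; have := bfs_find_min wP; rewrite (minn_idPl xf).
move/leq_trans/(_ (find_le_index _ (s_all u))); rewrite e_sym euw => /(_ isT).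
by rewrite leqNgt uP.
Qed.

Lemma find_mono x y : x != r -> idx x < idx y -> find (e x) s <= find (e y) s.
Proof.
move=> xr /ltnW/bfs_find_min; rewrite (minn_idPr _) //.
exact: ltnW (find_before xr).
Qed.

Lemma find_lt_size x : x != r -> find (e x) s < size s.
Proof. by move=> xr; rewrite (ltn_trans (find_before xr)) ?index_mem. Qed.

Lemma parent_adj x : x != r -> e x (parent x).
Proof. by move/find_lt_size/leftmost_nbr_adj. Qed.

Lemma index_parent x : x != r -> idx (parent x) = find (e x) s.
Proof. by move/find_lt_size/(index_leftmost_nbr s_uniq). Qed.

Let r_conn y : connect e r y := e_conn r y.
Local Notation d := (dist r_conn).

Lemma dist_gt0 x : 0 < d x -> x != r.
Proof. by apply: contraTneq => ->; rewrite dist_root. Qed.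

Lemma dist_mono x y : d x < d y -> idx x < idx y.
Proof.
move Dn: (d x) => n; elim: n x y Dn => [|n IH] x y dx dy.
  by rewrite (dist_eq0 dx) index_root index_gt0 // dist_gt0.
have xr : x != r by rewrite dist_gt0 ?dx.
have yr : y != r by rewrite dist_gt0 // (leq_trans _ dy).
rewrite ltnNge leq_eqVlt negb_or; apply/andP; split.
  have xy : x != y by apply: contraTneq dy => <-; rewrite dx ltnn.
  by apply: contra_neq xy => /(congr1 (nth r s)); rewrite !nth_index.
apply/negP => /(find_mono yr) fyx.
have [z ezx dz] := dist_pred r_conn xr.
have dpy : n < d (parent y).
  have epy : e (parent y) y by rewrite e_sym parent_adj.
  by have := dist_edge r_conn epy; lia.
have dzn : d z = n by lia.
have := IH z _ dzn dpy; rewrite index_parent //.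
have exz : e x z by rewrite e_sym.
by have := find_le_index exz (s_all z); lia.
Qed.

Lemma dist_parent x : x != r -> (d (parent x)).+1 = d x.
Proof.
move=> xr; have [z ezx dz] := dist_pred r_conn xr.
have exz : e x z by rewrite e_sym.
have epx : e (parent x) x by rewrite e_sym parent_adj.
have dpz : d (parent x) <= d z.
  rewrite leqNgt; apply/negP => /dist_mono; rewrite index_parent //.
  by have := find_le_index exz (s_all z); lia.
by have := dist_edge r_conn epx; lia.
Qed.

Lemma head_bfs a : head a s = r.
Proof. by case: s s_root (s_all r). Qed.

Lemma F_branch_leaf_childless v : F_branch_leaf e s v ->
  v != r /\ forall w, w != r -> parent w != v.
Proof.
rewrite /F_branch_leaf head_bfs => -[vr /eqP/cards1P [z Ez]]; split=> // w wr.
apply/eqP => wv; have edge_z t : ftree_edge e s v t -> t = z.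
  by move=> vt; apply/set1P; rewrite -Ez inE.
have vz : parent v = z by apply: edge_z; rewrite /ftree_edge head_bfs vr eqxx.
have wz : w = z by apply: edge_z; rewrite /ftree_edge !head_bfs wr wv eqxx orbT.
have := find_before wr; rewrite -index_parent // wv wz -vz index_parent //.
by have := find_before vr; lia.
Qed.

Hypotheses (e_irr : irreflexive e) (e_chordal : chordal e).

Section Leaf.
Variable v : T.
Hypotheses (v_root : v != r) (v_childless : forall w, w != r -> parent w != v).

Local Notation p := (parent v).
Let evp : e v p := parent_adj v_root.
Let dp : (d p).+1 = d v := dist_parent v_root.

Lemma nbr_below w : e v w -> d w < d v -> w != p -> e p w.
Proof.
move=> evw dw wp; have ewv : e w v by rewrite e_sym.
have dwv : (d w).+1 = d v by apply/eqP; rewrite eqn_leq dw (dist_edge r_conn ewv).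
have dpw : d p = d w by apply: succn_inj; rewrite dp dwv.
by apply: (lower_nbrs_adj e_sym e_irr e_chordal evp evw _ dpw dp); rewrite eq_sym.
Qed.

Lemma nbr_level w : e v w -> d w = d v ->
  e p w \/ exists b, [/\ e v b, e p b & e b w].
Proof.
move=> evw dw; have [pw | npw] := boolP (e p w); [by left | right].
have wr : w != r by rewrite dist_gt0 // dw -dp.
have ewc := parent_adj wr; have dc := dist_parent wr.
have dpc : d p = d (parent w) by apply: succn_inj; rewrite dp dc dw.
have evc : e v (parent w).
  have := lower_nbrs_cross e_sym e_irr e_chordal evw (esym dw) evp ewc dpc dp.
  by rewrite (e_sym w) (negbTE npw) orbF.
exists (parent w); split => //; last by rewrite e_sym.
apply: (lower_nbrs_adj e_sym e_irr e_chordal evp evc _ dpc dp).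
by apply: contraNneq npw => ->; rewrite e_sym.
Qed.

Lemma nbr_above w : e v w -> d w = (d v).+1 ->
  exists b, [/\ e v b, e p b & e b w].
Proof.
move=> evw dw; have ewv : e w v by rewrite e_sym.
have wr : w != r by rewrite dist_gt0 // dw.
set q := parent w; have ewq : e w q := parent_adj wr.
have dq : (d q).+1 = d w := dist_parent wr.
have dqv : d q = d v by apply: succn_inj; rewrite dq dw.
have qv : idx q < idx v.
  rewrite index_parent // ltn_neqAle find_le_index // andbT.
  by apply: contra (v_childless wr) => /eqP fw; rewrite /q /leftmost_nbr fw nth_index.
have evq : e v q.
  rewrite e_sym; apply: (lower_nbrs_adj e_sym e_irr e_chordal ewq ewv _ dqv dq).
  by apply: contraTneq qv => ->; rewrite ltnn.
exists q; split => //; last by rewrite e_sym.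
apply/negPn/negP => npq.
have qr : q != r by rewrite dist_gt0 // dqv -dp.
have eqc := parent_adj qr; have dc := dist_parent qr.
have dpc : d p = d (parent q) by apply: succn_inj; rewrite dc dqv dp.
have evc : e v (parent q).
  have := lower_nbrs_cross e_sym e_irr e_chordal evq (esym dqv) evp eqc dpc dp.
  by rewrite (e_sym q) (negbTE npq) orbF.
have same_find : find (e q) s = find (e v) s.
  apply/eqP; rewrite eqn_leq find_mono // -(index_parent qr).
  exact: find_le_index evc (s_all _).
have cp : parent q = p.
  rewrite -(nth_index r (s_all (parent q))) -(nth_index r (s_all p)).
  by rewrite !index_parent // same_find.
by rewrite cp (e_sym _ p) (negbTE npq) in eqc.
Qed.

Lemma nbr_near_parent w : e v w -> w != p ->
  e p w \/ exists b, [/\ e v b, e p b & e b w].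
Proof.
move=> evw wp; case: (ltngtP (d w) (d v)) => [lt | gt | eq].
- by left; apply: nbr_below.
- right; apply: nbr_above => //; apply/eqP; rewrite eqn_leq gt andbT.
  by have := dist_edge r_conn evw.
- exact: nbr_level.
Qed.

Lemma radius_nbhd_childless : radius_le e (nbhd e v) 2.
Proof.
exists p; first by rewrite inE.
move=> w; rewrite inE => evw; have [-> | wp] := eqVneq w p; first by exists [::].
case: (nbr_near_parent evw wp) => [pw | [b [evb epb ebw]]].
  by exists [:: w]; rewrite /= pw inE evw.
by exists [:: b; w]; rewrite /= epb ebw !inE evb evw.
Qed.

End Leaf.

End BFS.

Section Construction.
Variables (T : finType) (e : rel T).

Definition bfs_prefix (p : seq T) : Prop :=
  uniq p /\ forall i, i < size p -> forall y, y \notin take i p ->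
    ~~ label_prec (label e p i (nth y p i)) (label e p i y).

Lemma label_cat p q i x : i <= size p -> label e (p ++ q) i x = label e p i x.
Proof.
move=> ip; apply: eq_in_filter => j; rewrite mem_iota add0n => /andP [_ ji].
by rewrite nth_cat (leq_trans ji ip).
Qed.

Lemma bfs_prefix_total s : bfs_prefix s -> (forall x, x \in s) -> bfs_ordering e s.
Proof.
move=> [us bs] s_all; split=> // i isz y iy; apply: bs => //; apply/negP => yi.
have : index y s < i.
  rewrite -(cat_take_drop i s) index_cat yi.
  by rewrite (leq_trans _ (_ : size (take i s) <= i)) ?index_mem // size_take_min geq_minl.
by rewrite ltnNge iy.
Qed.

Lemma bfs_prefix_rcons p y : bfs_prefix p -> y \notin p ->
  (forall y', y' \notin p -> find (e^~ y) p <= find (e^~ y') p) ->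
  bfs_prefix (rcons p y).
Proof.
move=> [up bp] yp ymin; split; first by rewrite rcons_uniq yp up.
move=> i; rewrite size_rcons ltnS leq_eqVlt => /orP [/eqP -> | ip] z.
  rewrite -cats1 take_size_cat // nth_cat ltnn subnn /= !label_cat //.
  by move=> /ymin zmin; rewrite label_precE // -leqNgt (leq_trans (geq_minr _ _)).
by rewrite -cats1 take_cat ip nth_cat ip !label_cat ?(ltnW ip) //; apply: bp.
Qed.

Lemma bfs_prefix_star u q : uniq (u :: q) -> all (e u) q -> bfs_prefix (u :: q).
Proof.
elim/last_ind: q => [|q y IHq].
  by move=> _ _; split=> // [[|i]] // _ y; rewrite /label.
rewrite -rcons_cons rcons_uniq all_rcons => /andP[yq uq] /andP[euy eq].
apply: bfs_prefix_rcons => [|//|y' _]; first exact: IHq.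
by rewrite /= euy.
Qed.

Lemma bfs_prefix_extend p : bfs_prefix p -> exists q, bfs_ordering e (p ++ q).
Proof.
elim: {p}_.+1 {-2}p (ltnSn (#|T| - size p)) => // n IH p /ltnSE size_p bp.
case: (pickP [predC p]) => [y0 y0p | all_p]; last first.
  exists [::]; rewrite cats0; apply: bfs_prefix_total => // x.
  by have := all_p x; rewrite /= => /negbFE.
pose y := [arg min_(y < y0 | y \notin p) find (e^~ y) p].
have [yp ymin] : y \notin p /\
    forall y', y' \notin p -> find (e^~ y) p <= find (e^~ y') p.
  by rewrite /y; case: arg_minnP => // z zp zmin; split => // y' /zmin.
have size_py : #|T| - size (rcons p y) < n.
  have lt_p : size (y :: p) <= #|T| by rewrite -(card_uniqP _) ?max_card //= yp; case: bp.
  by rewrite size_rcons subnS prednK ?subn_gt0.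
have [q bq] := IH _ size_py (bfs_prefix_rcons bp yp ymin).
by exists (y :: q); rewrite -cat_rcons.
Qed.

End Construction.


Section StarFirst.
Variables (T : finType) (e : rel T) (v u : T).
Hypotheses (e_sym : symmetric e) (e_irr : irreflexive e) (evu : e v u).

Let uv : u != v. Proof. by apply: contraTneq evu => ->; rewrite e_irr. Qed.

Lemma bfs_nbrs_first : exists ws q,
  (forall y, (y \in ws) = e u y && (y != v)) /\ bfs_ordering e (u :: ws ++ v :: q).
Proof.
pose ws := enum [set y | e u y && (y != v)].
have ws_mem y : (y \in ws) = e u y && (y != v) by rewrite mem_enum inE.
have [q bq] : exists q, bfs_ordering e ((u :: rcons ws v) ++ q).
  apply/bfs_prefix_extend/bfs_prefix_star.
    rewrite /= rcons_uniq mem_rcons inE !ws_mem e_irr eqxx andbF enum_uniq.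
    by rewrite (negbTE uv).
  by rewrite all_rcons e_sym evu; apply/allP => y; rewrite ws_mem => /andP[].
by exists ws, q; rewrite /= -cat_rcons.
Qed.

Variables (ws q : seq T).
Hypotheses (ws_mem : forall y, (y \in ws) = e u y && (y != v)).
Hypothesis s_uniq : uniq (u :: ws ++ v :: q).
Hypothesis u_centre : forall w, w \in nbhd e v -> exists p,
  [/\ path e u p, last u p = w, all (mem (nbhd e v)) p & size p <= 2].

Local Notation s := (u :: ws ++ v :: q).

Lemma leftmost_nbr_v : leftmost_nbr e s v = u.
Proof. by rewrite /leftmost_nbr /= evu. Qed.

Lemma find_lt_index_v w : w != u -> e v w -> find (e w) s < index v s.
Proof.
move=> wu evw; have wN : w \in nbhd e v by rewrite inE.
have index_v : index v s = (size ws).+1.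
  by rewrite /= (negbTE uv) index_cat ws_mem eqxx andbF /= eqxx addn0.
have [p [pp lp pN sp]] := u_centre wN; rewrite index_v.
case: p pp lp pN sp => [|b [|w' [|? ?]]] //= pp lp pN _.
- by rewrite lp eqxx in wu.
- by rewrite andbT in pp; rewrite -lp e_sym pp.
case/and3P: pp => eub ebw _; rewrite lp e_sym in ebw.
have bws : b \in ws.
  by rewrite ws_mem eub; apply: contraTneq pN => ->; rewrite inE e_irr.
have bs : b \in s by rewrite inE mem_cat bws orbT.
apply: leq_ltn_trans (find_le_index ebw bs) _.
rewrite /= ifN; last by apply: contraTneq eub => ->; rewrite e_irr.
by rewrite index_cat bws ltnS index_mem.
Qed.

Lemma leftmost_nbr_neq_v w : w != u -> leftmost_nbr e s w != v.
Proof.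
move=> wu; apply/eqP => wv; have [fw | fw] := ltnP (find (e w) s) (size s).
  have evw : e v w by rewrite e_sym -wv leftmost_nbr_adj.
  by have := find_lt_index_v wu evw; rewrite -(index_leftmost_nbr s_uniq fw) wv ltnn.
have wv' : w = v by move: wv; rewrite /leftmost_nbr nth_default.
by move: wv; rewrite wv' leftmost_nbr_v => /eqP; rewrite (negbTE uv).
Qed.

Lemma F_branch_leaf_nbrs_first : F_branch_leaf e s v.
Proof.
split; first by rewrite eq_sym.
apply/eqP/cards1P; exists u; apply/setP => w.
rewrite !inE /ftree_edge /= leftmost_nbr_v (eq_sym v u) uv (eq_sym u w) /=.
by have [// | wu] := eqVneq w u; rewrite (negbTE (leftmost_nbr_neq_v wu)).
Qed.

End StarFirst.

Lemma bfs_leaf_of_radius2 (T : finType) (e : rel T) : symmetric e -> irreflexive e ->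
  forall v, radius_le e (nbhd e v) 2 -> exists s, bfs_ordering e s /\ F_branch_leaf e s v.
Proof.
move=> e_sym e_irr v [u uN u_centre]; have evu : e v u by rewrite inE in uN.
have [ws [q [ws_mem bq]]] := bfs_nbrs_first e_sym e_irr evu.
exists (u :: ws ++ v :: q); split=> //; have [[s_uniq _] _] := bq.
exact: (F_branch_leaf_nbrs_first e_sym e_irr evu ws_mem s_uniq u_centre).
Qed.

Theorem theorem13 (T : finType) (e : rel T) :
  simple_graph e -> connected_graph e -> chordal e -> 1 < #|T| ->
  forall v : T,
    (exists s : seq T, bfs_ordering e s /\ F_branch_leaf e s v) <->
    radius_le e (nbhd e v) 2.
Proof.
move=> [e_sym e_irr] e_conn e_chordal _ v; split; last exact: bfs_leaf_of_radius2.
move=> [s [s_bfs leaf]]; have s_root : head (head v s) s = head v s by case: (s).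
have [vr childless] := F_branch_leaf_childless e_sym e_conn s_bfs s_root leaf.
exact: (radius_nbhd_childless e_sym e_conn s_bfs s_root e_irr e_chordal vr childless).
Qed.
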